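(* Let $G$ be a connected locally finite quasi-transitive graph with exactly $2$ ends. Then $G$ has a periodic proper vertex-coloring with $\chi(G)$ colors.
   Context: A graph is locally finite if every vertex has finite degree. A graph $G$ is quasi-transitive if $V(G)$ has finitely many orbits under the action of its automorphism group $\mathrm{Aut}(G)$. A ray is an infinite one-way path; two rays are equivalent if there are infinitely many disjoint paths between them, and an end is an equivalence class of rays. $\chi(G)$ denotes the chromatic number (minimum number of colors in a proper vertex-coloring). A vertex-coloring of $G$ is periodic if the subgroup of automorphisms of $G$ mapping every vertex to a vertex of the same color acts quasi-transitively on $V(G)$, i.e. $V(G)$ has finitely many orbits under this subgroup. *)

From Stdlib Require Import List Relations.
Import ListNotations.

Section Graphs.
Variable V : Type.
Variable adj : V -> V -> Prop.

Definition simple_graph : Prop :=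
  (forall x y, adj x y -> adj y x) /\ (forall x, ~ adj x x).

Definition locally_finite : Prop :=
  forall v, exists l : list V, forall w, adj v w -> In w l.

Definition connected : Prop :=
  forall u v, clos_refl_trans V adj u v.

Definition is_aut (f : V -> V) : Prop :=
  (forall x y, adj x y <-> adj (f x) (f y)) /\
  exists g : V -> V, (forall x, g (f x) = x) /\ (forall x, f (g x) = x).

Definition finitely_many_orbits (S : (V -> V) -> Prop) : Prop :=
  exists reps : list V, forall v, exists u f, In u reps /\ S f /\ f u = v.

Definition quasi_transitive : Prop := finitely_many_orbits is_aut.

Definition is_ray (r : nat -> V) : Prop :=
  (forall m n, r m = r n -> m = n) /\ (forall n, adj (r n) (r (S n))).

Fixpoint chain (l : list V) : Prop :=
  match l with
  | x :: ((y :: _) as t) => adj x y /\ chain t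
  | _ => True
  end.

Definition is_path (p : list V) : Prop := p <> [] /\ NoDup p /\ chain p.

Definition ray_path (r1 r2 : nat -> V) (p : list V) : Prop :=
  forall d : V, is_path p /\
    (exists m, hd d p = r1 m) /\ (exists n, last p d = r2 n).

Definition ray_equiv (r1 r2 : nat -> V) : Prop :=
  exists P : nat -> list V,
    (forall i, ray_path r1 r2 (P i)) /\
    (forall i j v, i <> j -> In v (P i) -> In v (P j) -> False).

Definition has_exactly_two_ends : Prop :=
  exists r1 r2, is_ray r1 /\ is_ray r2 /\ ~ ray_equiv r1 r2 /\
    forall r, is_ray r -> ray_equiv r r1 \/ ray_equiv r r2.

Definition proper_coloring (k : nat) (c : V -> nat) : Prop :=
  (forall v, c v < k) /\ (forall x y, adj x y -> c x <> c y).

Definition chromatic_number (k : nat) : Prop :=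
  (exists c, proper_coloring k c) /\
  (forall j c, proper_coloring j c -> k <= j).

Definition color_preserving_aut (c : V -> nat) (f : V -> V) : Prop :=
  is_aut f /\ forall v, c (f v) = c v.

Definition periodic_coloring (c : V -> nat) : Prop :=
  finitely_many_orbits (color_preserving_aut c).

End Graphs.

From Stdlib Require Import List Relations Lia ZArith Classical ClassicalEpsilon.
Import ListNotations.

(* A finite set of vertices separates the two ends; outside a large ball around it lie a
   component [A] containing a tail of one end, a component [B] containing a tail of the
   other, and a finite connected middle.  By Konig's lemma a region with finite boundary
   containing a tail of neither end is finite.  Quasi-transitivity gives automorphisms
   moving the middle deep into [A]; each of them either shifts the complement of [A]
   into [B] or swaps the two ends, and two swaps compose to a shift [sg].  The vertices
   outside [A] sent into [A] by [sg^-1] form a finite fundamental domain: every vertex is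
   [sg^i d] for a unique [i : Z] and [d] in the domain, and the coordinate [i] changes by
   at most [M] along an edge.  In a proper colouring with chi(G) colours, two windows of
   [M + 1] consecutive layers carry the same pattern (pigeonhole); folding all layers
   periodically onto the stretch between them gives a proper colouring invariant under a
   power of [sg], hence periodic. *)

Lemma pigeonhole {A : Type} (L : list A) (f : nat -> A) :
  (forall k, In (f k) L) -> exists i j, i < j /\ f i = f j.
Proof.
  intros HL. apply NNPP; intros Hno.
  assert (Hnd : NoDup (map f (seq 0 (S (length L))))).
  { apply NoDup_nth_error. intros i j Hi E.
    rewrite length_map, length_seq in Hi.
    rewrite !nth_error_map, !nth_error_seq in E.
    destruct (Nat.ltb_spec i (S (length L))); [|lia].
    destruct (Nat.ltb_spec j (S (length L))); [|discriminate].
    simpl in E; injection E as E.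
    destruct (Nat.lt_trichotomy i j) as [Hij|[Hij|Hij]]; auto; exfalso; apply Hno.
    - exists i, j; auto.
    - exists j, i; auto. }
  apply NoDup_incl_length with (l' := L) in Hnd.
  - rewrite length_map, length_seq in Hnd; lia.
  - intros x Hx. apply in_map_iff in Hx. destruct Hx as [k [<- _]]; auto.
Qed.

Lemma disjoint_family_no_finite_hitting_set {A : Type} (P : nat -> list A) (L : list A) :
  (forall i j v, i <> j -> In v (P i) -> In v (P j) -> False) ->
  ~ (forall i, exists v, In v L /\ In v (P i)).
Proof.
  intros Hd Hhit. destruct (choice _ Hhit) as [f Hf].
  destruct (pigeonhole L f) as [i [j [Hij E]]]; [apply Hf|].
  apply (Hd i j (f i)); [lia|apply Hf|rewrite E; apply Hf].
Qed.

Lemma uniform_bound {A : Type} (P : nat -> A -> Prop) (l : list A) :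
  (forall n m a, n <= m -> P n a -> P m a) ->
  (forall a, In a l -> exists n, P n a) -> exists n, forall a, In a l -> P n a.
Proof.
  intros Hm; induction l as [|b l IH]; intros H.
  - exists 0; intros a [].
  - destruct (H b (or_introl eq_refl)) as [n1 H1].
    destruct IH as [n2 H2]; [intros a Ha; apply H; right; auto|].
    exists (Nat.max n1 n2); intros a [<-|Ha].
    + apply Hm with n1; auto; lia.
    + apply Hm with n2; auto; lia.
Qed.

Lemma last_default {A : Type} (l : list A) d d' : l <> [] -> last l d = last l d'.
Proof.
  induction l as [|a l IH]; intros H; [congruence|].
  destruct l as [|b l]; simpl; auto. apply IH; discriminate.
Qed.

Lemma last_app_nonnil {A : Type} (l1 l : list A) d : l <> [] -> last (l1 ++ l) d = last l d.
Proof.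
  induction l1 as [|a l1 IH]; intros H; simpl; auto.
  destruct (l1 ++ l) eqn:E.
  - apply app_eq_nil in E; destruct E; congruence.
  - apply IH; auto.
Qed.

Lemma In_last {A : Type} (l : list A) d : l <> [] -> In (last l d) l.
Proof.
  induction l as [|a l IH]; intros H; [congruence|].
  destruct l as [|b l]; simpl; auto. right; apply IH; discriminate.
Qed.

Lemma bounded_lists_finite (n k : nat) : exists L : list (list nat),
  forall l, length l = n -> (forall x, In x l -> x < k) -> In l L.
Proof.
  induction n as [|n [L HL]].
  - exists [[]]; intros l Hl _; destruct l; [left; auto|discriminate].
  - exists (concat (map (fun x => map (cons x) L) (seq 0 k))).
    intros [|x l] Hl Hx; [discriminate|]. apply in_concat.
    exists (map (cons x) L); split.
    + apply in_map_iff; exists x; split; auto. apply in_seq. specialize (Hx x (or_introl eq_refl)); lia.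
    + apply in_map, HL; [simpl in Hl; lia|]. intros y Hy; apply Hx; right; auto.
Qed.

Lemma Z_eq_of_mod_eq (a b w : Z) :
  (0 < w -> Z.abs (b - a) < w -> a mod w = b mod w -> a = b)%Z.
Proof.
  intros Hw Hab E. pose proof (Z.div_mod a w ltac:(lia)). pose proof (Z.div_mod b w ltac:(lia)).
  assert (a / w = b / w)%Z by (destruct (Z.lt_trichotomy (a / w) (b / w)) as [H1|[H1|H1]]; auto; nia).
  lia.
Qed.

Section Graph.
Variable V : Type.
Variable adj : V -> V -> Prop.
Hypothesis adj_sym : forall x y, adj x y -> adj y x.
Hypothesis adj_irrefl : forall x, ~ adj x x.
Hypothesis lf : locally_finite V adj.
Hypothesis gconn : connected V adj.

(** * Finite sets, balls and automorphisms *)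

Definition finite (P : V -> Prop) : Prop := exists L : list V, forall x, P x -> In x L.

Lemma finite_incl (P Q : V -> Prop) : finite Q -> (forall x, P x -> Q x) -> finite P.
Proof. intros [L HL] H; exists L; auto. Qed.

Lemma finite_union (P Q : V -> Prop) : finite P -> finite Q -> finite (fun x => P x \/ Q x).
Proof.
  intros [L1 H1] [L2 H2]; exists (L1 ++ L2); intros x [Hx|Hx]; apply in_or_app; auto.
Qed.

Lemma finite_big_union {A : Type} (l : list A) (P : A -> V -> Prop) :
  (forall a, In a l -> finite (P a)) -> finite (fun v => exists a, In a l /\ P a v).
Proof.
  induction l as [|a l IH]; intros H.
  - exists []; intros x [b [[] _]].
  - destruct (H a (or_introl eq_refl)) as [L1 H1].
    destruct IH as [L2 H2]. { intros b Hb; apply H; right; exact Hb. }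
    exists (L1 ++ L2); intros x [b [[<-|Hb] Hx]]; apply in_or_app.
    + left; auto.
    + right; apply H2; exists b; auto.
Qed.

Lemma neighbours_finite (L : list V) : finite (fun v => exists a, In a L /\ adj a v).
Proof.
  apply finite_big_union. intros a _. destruct (lf a) as [l Hl]. exists l; auto.
Qed.

Inductive dist_le : nat -> V -> V -> Prop :=
| dist_le_refl x : dist_le 0 x x
| dist_le_S n x y : dist_le n x y -> dist_le (S n) x y
| dist_le_step n x y z : dist_le n x y -> adj y z -> dist_le (S n) x z.

Lemma dist_le_cons n x y z : adj x y -> dist_le n y z -> dist_le (S n) x z.
Proof.
  intros Hxy H; induction H.
  - eapply dist_le_step; [constructor| exact Hxy].
  - apply dist_le_S; auto.
  - eapply dist_le_step; eauto.
Qed.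

Lemma dist_le_sym n x y : dist_le n x y -> dist_le n y x.
Proof.
  induction 1.
  - constructor.
  - apply dist_le_S; auto.
  - apply dist_le_cons with y; auto.
Qed.

Lemma dist_le_mono n m x y : n <= m -> dist_le n x y -> dist_le m x y.
Proof. induction 1; intros; auto. apply dist_le_S; auto. Qed.

Lemma dist_le_exists x y : exists n, dist_le n x y.
Proof.
  pose proof (gconn x y) as H. apply clos_rt_rtn1 in H.
  induction H as [|y z Hyz _ [n IH]].
  - exists 0; constructor.
  - exists (S n); eapply dist_le_step; eauto.
Qed.

Lemma ball_finite n x : finite (dist_le n x).
Proof.
  induction n.
  - exists [x]; intros y Hy; inversion Hy; subst; left; auto.
  - destruct IHn as [L HL]. destruct (neighbours_finite L) as [L2 H2].
    exists (L ++ L2); intros y Hy; inversion Hy; subst; apply in_or_app.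
    + left; auto.
    + right; apply H2; eexists; split; eauto.
Qed.

Definition boundary_in (X W : V -> Prop) : Prop :=
  forall x y, X x -> adj x y -> X y \/ W y.

Lemma ball_stays_in X W n x y : boundary_in X W -> dist_le n x y -> X x ->
  (forall w, dist_le n x w -> ~ W w) -> X y.
Proof.
  intros HXW H; induction H; intros Hx Hw; auto.
  - apply IHdist_le; auto. intros w Hr; apply Hw; apply dist_le_S; auto.
  - assert (X y) by (apply IHdist_le; auto; intros w Hr; apply Hw; apply dist_le_S; auto).
    destruct (HXW y z H1 H0); auto. exfalso; eapply Hw; [eapply dist_le_step; eauto|auto].
Qed.

Definition aut (h h' : V -> V) : Prop :=
  (forall x y, adj x y <-> adj (h x) (h y)) /\
  (forall x, h' (h x) = x) /\ (forall x, h (h' x) = x).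

Lemma aut_of_is_aut h : is_aut V adj h -> exists h', aut h h'.
Proof. intros [H1 [g [H2 H3]]]; exists g; repeat split; auto; apply H1. Qed.

Lemma is_aut_of_aut h h' : aut h h' -> is_aut V adj h.
Proof. intros [H1 [H2 H3]]; split; auto; exists h'; auto. Qed.

Lemma aut_sym h h' : aut h h' -> aut h' h.
Proof.
  intros [H1 [H2 H3]]; split; [|split; auto].
  intros x y; split; intros Ha.
  - apply H1; rewrite !H3; auto.
  - apply H1 in Ha; rewrite !H3 in Ha; auto.
Qed.

Lemma aut_comp h h' k k' : aut h h' -> aut k k' ->
  aut (fun x => h (k x)) (fun x => k' (h' x)).
Proof.
  intros [H1 [H2 H3]] [K1 [K2 K3]]; repeat split; intros.
  - apply (proj1 (H1 _ _)), (proj1 (K1 _ _)); auto.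
  - apply (proj2 (K1 _ _)), (proj2 (H1 _ _)); auto.
  - rewrite H2, K2; auto.
  - rewrite K3, H3; auto.
Qed.

Lemma aut_adj h h' x y : aut h h' -> adj x y -> adj (h x) (h y).
Proof. intros [H1 _] H; apply (proj1 (H1 _ _)); auto. Qed.

Lemma dist_le_aut h h' n x y : aut h h' -> dist_le n x y -> dist_le n (h x) (h y).
Proof.
  intros Ha; induction 1.
  - constructor.
  - apply dist_le_S; auto.
  - eapply dist_le_step; eauto. eapply aut_adj; eauto.
Qed.

Lemma boundary_in_preimage X W h h' : aut h h' -> boundary_in X W ->
  boundary_in (fun v => X (h' v)) (fun v => W (h' v)).
Proof.
  intros Ha HXW x y Xx Hxy. apply (HXW _ _ Xx). apply (aut_adj h' h); auto. apply aut_sym; auto.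
Qed.

Lemma finite_preimage K h h' : aut h h' -> finite K -> finite (fun v => K (h' v)).
Proof.
  intros [_ [_ H3]] [L HL]; exists (map h L); intros v Hv.
  rewrite <- (H3 v); apply in_map; auto.
Qed.

Lemma ray_aut h h' r : aut h h' -> is_ray V adj r -> is_ray V adj (fun n => h (r n)).
Proof.
  intros Ha [Hi Hadj]; split.
  - intros m n E. apply Hi. destruct Ha as [_ [H2 _]]. rewrite <- (H2 (r m)), <- (H2 (r n)), E; auto.
  - intros n; eapply aut_adj; eauto.
Qed.

(** * Paths, Konig's lemma and rays *)

Definition conn_in (P : V -> Prop) : V -> V -> Prop :=
  clos_refl_trans V (fun x y => adj x y /\ P x /\ P y).

Lemma conn_in_mono (P Q : V -> Prop) x y : (forall v, P v -> Q v) -> conn_in P x y -> conn_in Q x y.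
Proof.
  intros H; induction 1 as [x y [Hxy [Px Py]]| |].
  - apply rt_step; auto.
  - apply rt_refl.
  - eapply rt_trans; eauto.
Qed.

Lemma conn_in_sym P x y : conn_in P x y -> conn_in P y x.
Proof.
  induction 1 as [x y [Hxy [Px Py]]| |].
  - apply rt_step; auto.
  - apply rt_refl.
  - eapply rt_trans; eauto.
Qed.

Lemma conn_in_inside P x y : conn_in P x y -> P x -> P y.
Proof. induction 1 as [x y [_ [_ Py]]| |]; auto. Qed.

Lemma conn_in_aut P h h' x y : aut h h' -> conn_in P x y ->
  conn_in (fun v => P (h' v)) (h x) (h y).
Proof.
  intros Ha; induction 1 as [x y [Hxy [Px Py]]| |].
  - apply rt_step; split; [eapply aut_adj; eauto|].
    destruct Ha as [_ [H2 _]]; rewrite !H2; auto.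
  - apply rt_refl.
  - eapply rt_trans; eauto.
Qed.

Lemma chain_app_r (l1 l2 : list V) : chain V adj (l1 ++ l2) -> chain V adj l2.
Proof.
  induction l1 as [|a l1 IH]; simpl; auto.
  intros H; apply IH. destruct (l1 ++ l2); auto. destruct H; auto.
Qed.

Lemma conn_in_path (P : V -> Prop) a b : conn_in P a b -> P a ->
  exists q, NoDup (a :: q) /\ chain V adj (a :: q) /\ last (a :: q) a = b /\
    forall v, In v (a :: q) -> P v.
Proof.
  intros H; apply clos_rt_rt1n in H.
  induction H as [a|a y b [Hay [Pa Py]] _ IH]; intros Ha.
  - exists []; split; [|split; [|split]]; simpl; auto.
    + constructor; [auto|constructor].
    + intros v [<-|[]]; auto.
  - destruct (IH Py) as [q [Hnd [Hch [Hl Hp]]]].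
    destruct (classic (In a (y :: q))) as [Hin|Hnin].
    + apply in_split in Hin. destruct Hin as [l1 [l2 E]]. rewrite E in *.
      exists l2; split; [|split; [|split]].
      * apply NoDup_app_remove_l in Hnd; auto.
      * apply chain_app_r in Hch; auto.
      * rewrite (last_default _ a y) by discriminate.
        rewrite <- (last_app_nonnil l1) by discriminate. auto.
      * intros v Hv; apply Hp; apply in_or_app; right; auto.
    + exists (y :: q); split; [|split; [|split]].
      * constructor; auto.
      * simpl; split; auto.
      * change (last (y :: q) a = b). rewrite (last_default _ a y) by discriminate; auto.
      * intros v [<-|Hv]; auto.
Qed.

Lemma chain_crosses_boundary X W (HXW : boundary_in X W) : forall q x,
  chain V adj (x :: q) -> X x -> ~ X (last (x :: q) x) -> exists v, In v (x :: q) /\ W v.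
Proof.
  induction q as [|y q IH]; intros x Hch Hx Hl.
  - simpl in Hl; contradiction.
  - destruct Hch as [Hxy Hch].
    destruct (HXW x y Hx Hxy) as [Hy|Hy].
    + destruct (IH y Hch Hy) as [v [Hv Wv]].
      * change (~ X (last (y :: q) x)) in Hl. rewrite (last_default _ x y) in Hl by discriminate; auto.
      * exists v; split; auto; right; auto.
    + exists y; split; auto; right; left; auto.
Qed.

Lemma component_boundary_in W x : ~ W x -> boundary_in (conn_in (fun u => ~ W u) x) W.
Proof.
  intros Wx y z Hy Hyz. destruct (classic (W z)) as [Wz|Wz]; [right; auto|left].
  eapply rt_trans; [exact Hy|]. apply rt_step; repeat split; auto.
  exact (conn_in_inside _ _ _ Hy Wx).
Qed.

Lemma ray_of_extension (Good : V -> list V -> Prop) x :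
  Good x [] ->
  (forall v rest, Good v rest -> exists w, adj v w /\ ~ In w (v :: rest) /\ Good w (v :: rest)) ->
  exists rho, is_ray V adj rho /\ forall n, exists rest, Good (rho n) rest.
Proof.
  intros H0 Hstep.
  destruct (choice (fun (p : list V) w => forall v rest, p = v :: rest -> Good v rest ->
                      adj v w /\ ~ In w p /\ Good w p)) as [next Hnext].
  { intros [|v rest].
    - exists x; intros ? ? E; discriminate.
    - destruct (classic (Good v rest)) as [G|G].
      + destruct (Hstep v rest G) as [w Hw]. exists w; intros v' rest' E _.
        injection E as -> ->; auto.
      + exists x; intros v' rest' E G'; injection E as -> ->; contradiction. }
  set (trail := fix trail n := match n with 0 => [x] | S n => next (trail n) :: trail n end).
  set (rho := fun n => hd x (trail n)).
  assert (Htrail : forall n, exists rest, trail n = rho n :: rest /\ Good (rho n) rest).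
  { induction n as [|n [rest [E G]]]; [exists []; auto|].
    exists (trail n); split; [reflexivity|].
    apply (Hnext (trail n) (rho n) rest E G). }
  assert (Hnew : forall n, adj (rho n) (rho (S n)) /\ ~ In (rho (S n)) (trail n)).
  { intros n. destruct (Htrail n) as [rest [E G]].
    destruct (Hnext (trail n) (rho n) rest E G) as [H1 [H2 _]]. split; auto. }
  assert (Hin : forall n m, m <= n -> In (rho m) (trail n)).
  { induction n; intros m Hm.
    - assert (m = 0) by lia; subst. left; auto.
    - destruct (Nat.eq_dec m (S n)) as [->|Hne]; [left; auto|].
      right; apply IHn; lia. }
  exists rho; split; [split|].
  - assert (Hlt : forall m n, m < n -> rho m <> rho n).
    { intros m [|n] Hmn E; [lia|]. apply (proj2 (Hnew n)). rewrite <- E. apply Hin; lia. }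
    intros m n E. destruct (Nat.lt_trichotomy m n) as [H|[H|H]]; auto.
    + exfalso; eapply Hlt; eauto.
    + exfalso; eapply Hlt; eauto.
  - intros n; apply Hnew.
  - intros n. destruct (Htrail n) as [rest [_ G]]; eauto.
Qed.

Lemma konig_step X v rest :
  ~ finite (conn_in (fun u => X u /\ ~ In u rest) v) ->
  exists w, adj v w /\ X w /\ ~ In w (v :: rest) /\
    ~ finite (conn_in (fun u => X u /\ ~ In u (v :: rest)) w).
Proof.
  intros Hinf. apply NNPP; intros Hno. apply Hinf.
  destruct (lf v) as [Nv HNv].
  set (Q := fun w => adj v w /\ X w /\ ~ In w (v :: rest)).
  set (R := fun w => conn_in (fun u => X u /\ ~ In u (v :: rest)) w).
  assert (Hc : forall u, conn_in (fun u => X u /\ ~ In u rest) v u ->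
                 u = v \/ exists w, In w Nv /\ Q w /\ R w u).
  { intros u H. apply clos_rt_rtn1 in H.
    induction H as [|y u [Hyu [Py Pu]] _ IH]; [left; auto|].
    destruct (classic (u = v)) as [->|Huv]; [left; auto|right].
    assert (Pu' : X u /\ ~ In u (v :: rest)) by (split; [apply Pu|intros [E|E]; [congruence|apply Pu; auto]]).
    destruct IH as [->|[w [Hw [Qw Hr]]]].
    - exists u; split; [apply HNv; auto|]. split; [split; [auto|exact Pu']|apply rt_refl].
    - exists w; split; [auto|split; [auto|]].
      eapply rt_trans; [exact Hr|]. apply rt_step; split; [auto|split; [|exact Pu']].
      apply (conn_in_inside _ _ _ Hr), Qw. }
  destruct (finite_big_union Nv (fun w u => Q w /\ R w u)) as [L HL].
  { intros w _. destruct (classic (Q w)) as [Qw|Qw].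
    - destruct (classic (finite (R w))) as [[L HL]|F].
      + exists L; intros u [_ Hu]; auto.
      + exfalso; apply Hno; exists w; destruct Qw as [? [? ?]]; auto.
    - exists []; intros u [Hu _]; contradiction. }
  exists (v :: L); intros u Hu. destruct (Hc u Hu) as [->|[w [H1 [H2 H3]]]]; [left; auto|].
  right; apply HL; exists w; auto.
Qed.

(* Finitely many components of [X] meet the neighbourhood of [W] (or contain [s0]), and
   they cover [X]. *)
Lemma infinite_component X W : boundary_in X W -> finite W -> ~ finite X ->
  exists x, X x /\ ~ finite (conn_in X x).
Proof.
  intros HXW [LW HW] Hinf.
  assert (Hs0 : exists s0, X s0).
  { apply NNPP; intros H; apply Hinf; exists []; intros x Hx; apply H; eauto. }
  destruct Hs0 as [s0 Xs0].
  destruct (neighbours_finite LW) as [LN HLN].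
  assert (Hcover : forall v, X v -> exists x, In x (s0 :: LN) /\ X x /\ conn_in X x v).
  { intros v Xv. pose proof (gconn s0 v) as H. apply clos_rt_rtn1 in H.
    induction H as [|y v Hyv _ IH].
    - exists s0; repeat split; auto; [left; auto|apply rt_refl].
    - destruct (classic (X y)) as [Xy|Xy].
      + destruct (IH Xy) as [x [H1 [H2 H3]]]. exists x; repeat split; auto.
        eapply rt_trans; [exact H3|]. apply rt_step; auto.
      + destruct (HXW v y Xv (adj_sym _ _ Hyv)) as [|Wy]; [contradiction|].
        exists v; repeat split; auto; [|apply rt_refl].
        right; apply HLN; exists y; split; auto. }
  apply NNPP; intros Hno. apply Hinf.
  destruct (finite_big_union (s0 :: LN) (fun a v => X a /\ conn_in X a v)) as [L HL].
  - intros a _. destruct (classic (X a)) as [Xa|Xa].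
    + destruct (classic (finite (conn_in X a))) as [[L HL]|F].
      * exists L; intros x [_ Hx]; auto.
      * exfalso; apply Hno; eauto.
    + exists []; intros x [Hx _]; contradiction.
  - exists L; intros v Xv. apply HL. destruct (Hcover v Xv) as [x [H1 [H2 H3]]]; eauto.
Qed.

Lemma konig_ray X W : boundary_in X W -> finite W -> ~ finite X ->
  exists rho, is_ray V adj rho /\ forall n, X (rho n).
Proof.
  intros HXW HW Hinf.
  destruct (infinite_component X W HXW HW Hinf) as [x [Xx Hx]].
  destruct (ray_of_extension (fun v rest => X v /\
              ~ finite (conn_in (fun u => X u /\ ~ In u rest) v)) x) as [rho [Hray Hrho]].
  - split; auto. intros F; apply Hx. eapply finite_incl; [exact F|].
    intros y; apply conn_in_mono. intros u Su; split; auto.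
  - intros v rest [_ Hv]. destruct (konig_step X v rest Hv) as [w [H1 [H2 [H3 H4]]]].
    exists w; auto.
  - exists rho; split; auto. intros n; destruct (Hrho n) as [rest [Sn _]]; auto.
Qed.

Lemma boundary_in_mono X W W' : boundary_in X W -> (forall v, W v -> W' v) -> boundary_in X W'.
Proof. intros HXW H x y Xx Hxy. destruct (HXW x y Xx Hxy); auto. Qed.

Lemma ball_connected n x y : dist_le n x y -> conn_in (dist_le n x) x y.
Proof.
  induction 1.
  - apply rt_refl.
  - eapply conn_in_mono; [|exact IHdist_le]. intros v Hv; apply dist_le_S; auto.
  - eapply rt_trans; [eapply conn_in_mono; [|exact IHdist_le]; intros v Hv; apply dist_le_S; auto|].
    apply rt_step; repeat split; auto; [apply dist_le_S; auto|eapply dist_le_step; eauto].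
Qed.

(* A walk from [z0] into the complement of [X] last enters it from [Z]. *)
Lemma complement_connected X Z z0 : boundary_in X Z -> (forall v, Z v -> ~ X v) ->
  (forall v, Z v -> conn_in Z z0 v) -> Z z0 -> forall v, ~ X v -> conn_in (fun u => ~ X u) z0 v.
Proof.
  intros HXZ HZ Hc Hz0 v Hv. pose proof (gconn z0 v) as H. apply clos_rt_rtn1 in H.
  induction H as [|y v Hyv _ IH].
  - apply rt_refl.
  - destruct (classic (X y)) as [Xy|Xy].
    + destruct (HXZ y v Xy Hyv) as [|Zv]; [contradiction|].
      eapply conn_in_mono; [|apply Hc; auto]. auto.
    + eapply rt_trans; [apply IH; auto|]. apply rt_step; auto.
Qed.

Lemma connected_stays_in (P : V -> Prop) z0 X W : (forall v, P v -> conn_in P z0 v) ->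
  boundary_in X W -> (forall v, P v -> ~ W v) -> forall z, P z -> X z -> forall v, P v -> X v.
Proof.
  intros Hc HXW HW z Pz Xz v Pv.
  assert (H : conn_in P z v) by (eapply rt_trans; [apply conn_in_sym, Hc; auto|apply Hc; auto]).
  apply clos_rt_rtn1 in H. induction H as [|y w [Hyw [Py Pw]] _ IH]; auto.
  destruct (HXW y w (IH Py) Hyw) as [|Ww]; auto. exfalso; apply (HW w); auto.
Qed.

Lemma iter_adj f f' n x y : aut f f' -> adj x y -> adj (Nat.iter n f x) (Nat.iter n f y).
Proof. intros Ha H; induction n; simpl; auto. eapply aut_adj; eauto. Qed.

Lemma iter_cancel f f' n x : aut f f' -> Nat.iter n f' (Nat.iter n f x) = x.
Proof.
  intros Ha; induction n; [reflexivity|].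
  rewrite Nat.iter_succ_r, Nat.iter_succ. destruct Ha as [_ [H2 _]]. rewrite H2; auto.
Qed.

(* Each application of [f] absorbs one more step of the distance from [x]. *)
Lemma iter_absorbs_dist f f' (T U : V -> Prop) : aut f f' ->
  (forall v, T v -> U (f v)) -> (forall v, U v -> T v) -> (forall x y, U x -> adj x y -> T y) ->
  forall n x y, dist_le n x y -> T x -> T (Nat.iter n f y).
Proof.
  intros Ha HTU HUT HU n x y Hr Tx; induction Hr; simpl; auto.
  apply (HU (f (Nat.iter n f y))); [apply HTU; auto|].
  apply (aut_adj f f'); auto. apply iter_adj with f'; auto.
Qed.

Definition eventually_in (r : nat -> V) (X : V -> Prop) : Prop :=
  exists N, forall n, N <= n -> X (r n).

Lemma ray_eventually_avoids rho W : is_ray V adj rho -> finite W ->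
  exists N, forall n, N <= n -> ~ W (rho n).
Proof.
  intros [Hinj _] [L HL].
  enough (H : exists N, forall n, N <= n -> ~ In (rho n) L).
  { destruct H as [N HN]; exists N; intros n Hn Wn; apply (HN n Hn); auto. }
  clear HL. induction L as [|a L [N HN]]; [exists 0; intros n _ []|].
  destruct (classic (exists m, rho m = a)) as [[m Hm]|Hno].
  - exists (Nat.max N (S m)); intros n Hn [E|E].
    + assert (n = m) by (apply Hinj; congruence). lia.
    + apply (HN n); auto; lia.
  - exists N; intros n Hn [E|E]; [apply Hno; eauto|apply (HN n); auto].
Qed.

Lemma ray_eventually_stays X W rho N : is_ray V adj rho -> boundary_in X W ->
  (forall n, N <= n -> ~ W (rho n)) -> X (rho N) -> forall n, N <= n -> X (rho n).
Proof.
  intros [_ Hadj] HXW Hw HX n Hn. induction Hn; auto.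
  destruct (HXW _ _ IHHn (Hadj m)) as [H|H]; auto. exfalso; apply (Hw (S m)); auto.
Qed.

(* Every path from a tail vertex of [rho] to a tail vertex of [sig] crosses [W];
   the remaining paths meet one of the two finite initial segments. *)
Lemma rays_inequiv_of_cut X W rho sig : boundary_in X W -> finite W ->
  eventually_in rho X -> eventually_in sig (fun v => ~ X v) -> ~ ray_equiv V adj rho sig.
Proof.
  intros HXW [LW HLW] [N Hr] [N' Hs] [P [HP Hd]].
  apply (disjoint_family_no_finite_hitting_set P (LW ++ map rho (seq 0 N) ++ map sig (seq 0 N')) Hd).
  intros i. destruct (HP i (rho 0)) as [[Hne [Hnd Hch]] [[m Hm] [n Hn]]].
  destruct (P i) as [|x q] eqn:EP; [congruence|]. simpl in Hm.
  destruct (Nat.lt_ge_cases m N) as [Hm'|Hm'].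
  { exists x; split; [|left; auto]. apply in_or_app; right; apply in_or_app; left.
    rewrite Hm; apply in_map, in_seq; lia. }
  destruct (Nat.lt_ge_cases n N') as [Hn'|Hn'].
  { exists (last (x :: q) (rho 0)); split; [|apply In_last; discriminate].
    apply in_or_app; right; apply in_or_app; right.
    rewrite Hn; apply in_map, in_seq; lia. }
  destruct (chain_crosses_boundary X W HXW q x Hch) as [v [Hv Wv]].
  - rewrite Hm; auto.
  - rewrite (last_default _ x (rho 0)) by discriminate. rewrite Hn; auto.
  - exists v; split; auto. apply in_or_app; left; auto.
Qed.

(** * A cut between the two ends *)

Section TwoEnds.
Variables r1 r2 : nat -> V.
Hypothesis r1_ray : is_ray V adj r1.
Hypothesis r2_ray : is_ray V adj r2.
Hypothesis r12_inequiv : ~ ray_equiv V adj r1 r2.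
Hypothesis two_ends : forall r, is_ray V adj r -> ray_equiv V adj r r1 \/ ray_equiv V adj r r2.
Hypothesis qt : quasi_transitive V adj.

(* An infinite [X] would contain a ray by Konig, inequivalent to both [r1] and [r2]. *)
Lemma finite_of_ends_leave X W : boundary_in X W -> finite W ->
  eventually_in r1 (fun v => ~ X v) -> eventually_in r2 (fun v => ~ X v) -> finite X.
Proof.
  intros HXW HW H1 H2. apply NNPP; intros Hinf.
  destruct (konig_ray X W HXW HW Hinf) as [rho [Hr HX]].
  assert (Hrho : eventually_in rho X) by (exists 0; auto).
  destruct (two_ends rho Hr) as [E|E]; revert E; apply (rays_inequiv_of_cut X W); auto.
Qed.

(* Some automorphism maps an orbit representative to a vertex of [rho] far from [W]; as [Y]
   is within bounded distance of every representative, its image stays inside [X]. *)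
Lemma aut_into_side X W Y rho : boundary_in X W -> finite W -> finite Y -> is_ray V adj rho ->
  eventually_in rho X -> exists h h', aut h h' /\ forall y, Y y -> X (h y).
Proof.
  intros HXW [LW HLW] [LY HLY] Hr [N HX].
  destruct qt as [reps Hreps].
  destruct (uniform_bound (fun n u => forall y, In y LY -> dist_le n u y) reps) as [r0 Hr0].
  { intros n m a Hnm H y Hy; apply dist_le_mono with n; auto. }
  { intros u _. apply uniform_bound.
    - intros n m a Hnm H; apply dist_le_mono with n; auto.
    - intros y _; apply dist_le_exists. }
  destruct (finite_big_union LW (fun w v => dist_le r0 w v)) as [BW HBW].
  { intros a _; apply ball_finite. }
  destruct (ray_eventually_avoids rho (fun v => In v BW) Hr) as [N1 HN1]; [exists BW; auto|].
  set (n := Nat.max N N1).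
  destruct (Hreps (rho n)) as [u [f [Hu [Hf Efu]]]].
  destruct (aut_of_is_aut f Hf) as [f' Hff].
  exists f, f'; split; auto. intros y Hy.
  assert (Hry : dist_le r0 (f u) (f y)) by (apply dist_le_aut with f'; auto).
  rewrite Efu in Hry.
  apply (ball_stays_in X W r0 (rho n)); auto.
  - apply HX; unfold n; lia.
  - intros w Hw Ww. apply (HN1 n); [unfold n; lia|]. apply HBW; exists w; split; auto.
    apply dist_le_sym; auto.
Qed.

(* Otherwise paths avoiding all previously chosen ones can be picked forever. *)
Lemma finite_separator : exists F : list V,
  forall p, ray_path V adj r1 r2 p -> exists v, In v p /\ In v F.
Proof.
  apply NNPP; intros Hno.
  assert (H : forall F : list V, exists p, ray_path V adj r1 r2 p /\ forall v, In v p -> ~ In v F).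
  { intros F. apply NNPP; intros H2. apply Hno. exists F. intros p Hp.
    apply NNPP; intros H3. apply H2. exists p; split; auto. intros v Hv Hv'; apply H3; eauto. }
  destruct (choice _ H) as [nextp Hn].
  set (acc := fix acc n := match n with 0 => [] | S n => acc n ++ nextp (acc n) end).
  assert (Hsub : forall i j v, i < j -> In v (nextp (acc i)) -> In v (acc j)).
  { intros i j v Hij Hv. induction Hij; simpl; apply in_or_app; auto. }
  apply r12_inequiv. exists (fun i => nextp (acc i)); split.
  - intros i; apply Hn.
  - intros i j v Hij Hi Hj. destruct (Nat.lt_gt_cases i j) as [[Hlt|Hlt] _]; auto.
    + apply (proj2 (Hn (acc j)) v Hj). apply Hsub with i; auto.
    + apply (proj2 (Hn (acc i)) v Hi). apply Hsub with j; auto.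
Qed.

Lemma separated_components (F : list V) (Z : V -> Prop) m n v :
  (forall p, ray_path V adj r1 r2 p -> exists u, In u p /\ In u F) -> (forall u, In u F -> Z u) ->
  ~ Z (r1 m) -> conn_in (fun u => ~ Z u) (r1 m) v -> conn_in (fun u => ~ Z u) (r2 n) v -> False.
Proof.
  intros HF HFZ Hm H1 H2.
  destruct (conn_in_path (fun u => ~ Z u) (r1 m) (r2 n)) as [q [Hnd [Hch [Hl Hp]]]]; auto.
  { eapply rt_trans; [exact H1|apply conn_in_sym; exact H2]. }
  destruct (HF (r1 m :: q)) as [u [Hu HuF]].
  - intros d; split; [split; [discriminate|split; auto]|split].
    + exists m; auto.
    + exists n. rewrite (last_default _ d (r1 m)) by discriminate; auto.
  - exact (Hp u Hu (HFZ u HuF)).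
Qed.

Definition middle (A B : V -> Prop) (v : V) : Prop := ~ A v /\ ~ B v.

Lemma middle_finite A B Z : boundary_in A Z -> boundary_in B Z -> finite Z ->
  eventually_in r1 A -> eventually_in r2 B -> finite (middle A B).
Proof.
  intros HAZ HBZ FZ [N1 H1] [N2 H2].
  apply finite_incl with (fun v => (middle A B v /\ ~ Z v) \/ Z v).
  - apply finite_union; auto. apply (finite_of_ends_leave _ Z); auto.
    + intros x y [[nAx nBx] nZx] Hxy. destruct (classic (Z y)) as [Zy|Zy]; [right; auto|left].
      split; [split|auto]; intros H.
      * destruct (HAZ y x H (adj_sym _ _ Hxy)); contradiction.
      * destruct (HBZ y x H (adj_sym _ _ Hxy)); contradiction.
    + exists N1; intros n Hn [[H _] _]; apply H; auto.
    + exists N2; intros n Hn [[_ H] _]; apply H; auto.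
  - intros v Mv; destruct (classic (Z v)); auto.
Qed.

Record cut (A B : V -> Prop) (f0 : V) : Prop := {
  cut_disjoint : forall v, A v -> B v -> False;
  cut_boundary_l : boundary_in A (middle A B);
  cut_boundary_r : boundary_in B (middle A B);
  cut_middle_finite : finite (middle A B);
  cut_root : middle A B f0;
  cut_middle_connected : forall v, middle A B v -> conn_in (middle A B) f0 v;
  cut_end_l : eventually_in r1 A;
  cut_end_r : eventually_in r2 B }.

(* [A] and [B] are the components containing the tails of [r1] and [r2] outside a ball
   [Z] around a finite separator. *)
Lemma cut_exists : exists A B f0, cut A B f0.
Proof.
  destruct finite_separator as [F HF].
  set (f0 := r1 0).
  destruct (uniform_bound (fun n a => dist_le n f0 a) F) as [R HR].
  { intros n m a Hnm H; apply dist_le_mono with n; auto. }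
  { intros a _; apply dist_le_exists. }
  set (Z := dist_le R f0).
  assert (FZ : finite Z) by apply ball_finite.
  assert (Zf0 : Z f0) by (apply (dist_le_mono 0); [lia|constructor]).
  destruct (ray_eventually_avoids r1 Z r1_ray FZ) as [N1 HN1].
  destruct (ray_eventually_avoids r2 Z r2_ray FZ) as [N2 HN2].
  set (A := conn_in (fun u => ~ Z u) (r1 N1)).
  set (B := conn_in (fun u => ~ Z u) (r2 N2)).
  assert (AZ : forall v, A v -> ~ Z v) by (intros v Hv; apply (conn_in_inside _ _ _ Hv), HN1; auto).
  assert (BZ : forall v, B v -> ~ Z v) by (intros v Hv; apply (conn_in_inside _ _ _ Hv), HN2; auto).
  assert (HAZ : boundary_in A Z) by (apply component_boundary_in, HN1; auto).
  assert (HBZ : boundary_in B Z) by (apply component_boundary_in, HN2; auto).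
  assert (ZM : forall v, Z v -> middle A B v) by (intros v Zv; split; intros H; [apply (AZ v)|apply (BZ v)]; auto).
  assert (tA : eventually_in r1 A).
  { exists N1. apply (ray_eventually_stays A Z r1 N1); auto. apply rt_refl. }
  assert (tB : eventually_in r2 B).
  { exists N2. apply (ray_eventually_stays B Z r2 N2); auto. apply rt_refl. }
  exists A, B, f0; split; auto.
  - intros v Av Bv. apply (separated_components F Z N1 N2 v); auto.
  - apply (boundary_in_mono _ Z); auto.
  - apply (boundary_in_mono _ Z); auto.
  - apply (middle_finite A B Z); auto.
  - intros v Mv.
    assert (H : conn_in (fun u => ~ (A u \/ B u)) f0 v).
    { apply (complement_connected _ Z).
      - intros x y [Ax|Bx] Hxy.
        + destruct (HAZ x y Ax Hxy); auto.
        + destruct (HBZ x y Bx Hxy); auto.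
      - intros u Zu [Au|Bu]; [apply (AZ u)|apply (BZ u)]; auto.
      - intros u Zu. apply ball_connected; auto.
      - exact Zf0.
      - destruct Mv as [nAv nBv]; intros [Av|Bv]; auto. }
    eapply conn_in_mono; [|exact H]. intros u Hu; split; intros H'; apply Hu; auto.
Qed.

(** * A translation with a finite fundamental domain *)

Section Cut.
Variables (A B : V -> Prop) (f0 : V).
Hypothesis Hcut : cut A B f0.

Let M := middle A B.

Lemma not_l_connected v : ~ A v -> conn_in (fun u => ~ A u) f0 v.
Proof.
  apply (complement_connected A M); try apply Hcut.
  intros u Mu; apply Mu.
Qed.

Lemma not_r_connected v : ~ B v -> conn_in (fun u => ~ B u) f0 v.
Proof.
  apply (complement_connected B M); try apply Hcut.
  intros u Mu; apply Mu.
Qed.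

Lemma cut_trichotomy v : A v \/ M v \/ B v.
Proof.
  destruct (classic (A v)); auto. destruct (classic (B v)); auto. right; left; split; auto.
Qed.

(* [h^-1] maps the connected set [~ A] off the middle, so it stays on one side. *)
Lemma aut_orientation h h' : aut h h' -> (forall k, M k -> A (h k)) ->
  (forall v, ~ A v -> B (h' v)) \/ (forall v, ~ A v -> A (h' v)).
Proof.
  intros Ha Hh.
  assert (HW : forall v, ~ A v -> ~ M (h' v)).
  { intros v Hv Mv. apply Hv. apply Hh in Mv. destruct Ha as [_ [_ H3]]. rewrite H3 in Mv; auto. }
  assert (Hf0 : ~ A f0) by apply (cut_root _ _ _ Hcut).
  destruct (cut_trichotomy (h' f0)) as [H|[H|H]].
  - right. apply (connected_stays_in _ f0 (fun v => A (h' v)) (fun v => M (h' v))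
                    not_l_connected) with f0; auto.
    apply boundary_in_preimage with h; auto. apply Hcut.
  - exfalso; apply (HW f0); auto.
  - left. apply (connected_stays_in _ f0 (fun v => B (h' v)) (fun v => M (h' v))
                   not_l_connected) with f0; auto.
    apply boundary_in_preimage with h; auto. apply Hcut.
Qed.

(* [h1] and [h2] both swap the two ends of the cut; then [h1^-1 h2] shifts. *)
Lemma shift_of_end_swaps h1 h1' h2 h2' : aut h1 h1' -> aut h2 h2' ->
  (forall v, ~ A v -> A (h1' v)) -> (forall k, M k -> A (h2 k) /\ B (h1' (h2 k))) ->
  (forall v, ~ A v -> A (h2' v)) ->
  exists sg g, aut sg g /\ forall v, ~ A v -> B (sg v).
Proof.
  intros Ha1 Ha2 Hswap1 Hh2 Hswap2.
  assert (Hf0 : M f0) by apply (cut_root _ _ _ Hcut).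
  pose proof Ha1 as [_ [E12 E13]]. pose proof Ha2 as [_ [E22 E23]].
  assert (HnotB : forall v, ~ B (h1' v) -> A (h2' v)).
  { apply (connected_stays_in _ (h1 f0) _ (fun v => M (h2' v))) with f0.
    - intros v Pv. pose proof (conn_in_aut _ h1 h1' f0 (h1' v) Ha1 (not_r_connected _ Pv)) as H.
      rewrite E13 in H; auto.
    - apply boundary_in_preimage with h2; auto. apply Hcut.
    - intros v Pv Mv. apply Hh2 in Mv. rewrite E23 in Mv. apply Pv, Mv.
    - intros H. apply (cut_disjoint _ _ _ Hcut (h1' f0)); auto. apply Hswap1, Hf0.
    - apply Hswap2, Hf0. }
  assert (HnotA : forall v, ~ A (h2' v) -> B (h1' v)).
  { apply (connected_stays_in _ (h2 f0) _ (fun v => M (h1' v))) with (h2 f0).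
    - intros v Pv. pose proof (conn_in_aut _ h2 h2' f0 (h2' v) Ha2 (not_l_connected _ Pv)) as H.
      rewrite E23 in H; auto.
    - apply boundary_in_preimage with h1; auto. apply Hcut.
    - intros v Pv Mv. apply Pv, HnotB, Mv.
    - rewrite E22; apply Hf0.
    - apply Hh2, Hf0. }
  exists (fun v => h1' (h2 v)), (fun v => h2' (h1 v)); split.
  - apply aut_comp; auto. apply aut_sym; auto.
  - intros v Hv. apply HnotA. rewrite E22; auto.
Qed.

(* A second automorphism moves the middle into [A] and [h1 B], where [h1 o r2] has a tail. *)
Lemma shift_of_end_swap h1 h1' : aut h1 h1' -> (forall v, ~ A v -> A (h1' v)) ->
  exists sg g, aut sg g /\ forall v, ~ A v -> B (sg v).
Proof.
  intros Ha1 Hswap1. pose proof Ha1 as [_ [E12 E13]].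
  assert (Hswap1_inv : forall v, ~ A v -> A (h1 v)).
  { intros v Hv. apply NNPP; intros H. apply Hswap1 in H. rewrite E12 in H. contradiction. }
  set (A_h1B := fun v => A v /\ B (h1' v)).
  set (M_h1M := fun v => M v \/ M (h1' v)).
  assert (HA_h1B : boundary_in A_h1B M_h1M).
  { intros x y [Ax Bx] Hxy.
    destruct (cut_boundary_l _ _ _ Hcut x y Ax Hxy) as [Ay|My]; [|right; left; auto].
    destruct (boundary_in_preimage B M h1 h1' Ha1 (cut_boundary_r _ _ _ Hcut) x y Bx Hxy)
      as [By|My]; [|right; right; auto].
    left; split; auto. }
  assert (FM_h1M : finite M_h1M).
  { apply finite_union; [|apply finite_preimage with h1; auto]; apply Hcut. }
  destruct (aut_into_side A_h1B M_h1M M (fun n => h1 (r2 n))) as [h2 [h2' [Ha2 Hh2]]]; auto.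
  - apply Hcut.
  - apply ray_aut with h1'; auto.
  - destruct (cut_end_r _ _ _ Hcut) as [N HN]. exists N; intros n Hn; split.
    + apply Hswap1_inv. intros H; apply (cut_disjoint _ _ _ Hcut (r2 n)); auto.
    + unfold A_h1B; simpl. rewrite E12; auto.
  - destruct (aut_orientation h2 h2' Ha2 (fun k Mk => proj1 (Hh2 k Mk))) as [Hswap2|Hswap2].
    + exists h2', h2; split; auto. apply aut_sym; auto.
    + apply (shift_of_end_swaps h1 h1' h2 h2'); auto.
Qed.

Lemma shift_exists : exists sg g, aut sg g /\ forall v, ~ A v -> B (sg v).
Proof.
  destruct (aut_into_side A M M r1) as [h [h' [Ha Hh]]]; try apply Hcut; auto.
  destruct (aut_orientation h h' Ha Hh) as [Hshift|Hswap].
  - exists h', h; split; auto. apply aut_sym; auto.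
  - apply (shift_of_end_swap h h'); auto.
Qed.

Section Shift.
Variables sg g : V -> V.
Hypothesis Hag : aut sg g.
Hypothesis Hshift : forall v, ~ A v -> B (sg v).

Lemma inv_shift v : ~ B v -> A (g v).
Proof.
  pose proof Hag as [_ [_ E]].
  intros Hv. apply NNPP; intros H. apply Hshift in H. rewrite E in H. contradiction.
Qed.

Lemma adj_r_not_l x y : B x -> adj x y -> ~ A y.
Proof.
  intros Bx Hxy Ay. destruct (cut_boundary_l _ _ _ Hcut y x Ay (adj_sym _ _ Hxy)) as [Ax|Mx].
  - apply (cut_disjoint _ _ _ Hcut x); auto.
  - exact (proj2 Mx Bx).
Qed.

Lemma adj_l_not_r x y : A x -> adj x y -> ~ B y.
Proof.
  intros Ax Hxy By. destruct (cut_boundary_r _ _ _ Hcut y x By (adj_sym _ _ Hxy)) as [Bx|Mx].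
  - apply (cut_disjoint _ _ _ Hcut x); auto.
  - exact (proj1 Mx Ax).
Qed.

Lemma iter_shift_leaves_l v : exists n, ~ A (Nat.iter n sg v).
Proof.
  destruct (dist_le_exists f0 v) as [n Hr]. exists n.
  apply (iter_absorbs_dist sg g (fun u => ~ A u) B Hag Hshift) with f0; auto.
  - intros u Bu Au. apply (cut_disjoint _ _ _ Hcut u); auto.
  - exact adj_r_not_l.
  - apply (cut_root _ _ _ Hcut).
Qed.

Lemma iter_inv_enters_l v : exists n, A (Nat.iter n g v).
Proof.
  destruct (dist_le_exists f0 v) as [n Hr]. exists (S n). simpl.
  apply inv_shift.
  apply (iter_absorbs_dist g sg (fun u => ~ B u) A (aut_sym _ _ Hag) inv_shift) with f0; auto.
  - intros u Au Bu. apply (cut_disjoint _ _ _ Hcut u); auto.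
  - exact adj_l_not_r.
  - apply (cut_root _ _ _ Hcut).
Qed.

Definition domain (v : V) : Prop := ~ A v /\ A (g v).

Lemma iter_crosses_domain n v : A v -> ~ A (Nat.iter n sg v) ->
  exists k, 1 <= k <= n /\ domain (Nat.iter k sg v).
Proof.
  pose proof Hag as [_ [E _]].
  revert v; induction n; intros v Av H; [simpl in H; contradiction|].
  destruct (classic (A (sg v))) as [As|As].
  - rewrite Nat.iter_succ_r in H. destruct (IHn (sg v) As H) as [k [Hk Dk]].
    exists (S k); split; [lia|]. rewrite Nat.iter_succ_r; auto.
  - exists 1; split; [lia|]. split; simpl; auto. rewrite E; auto.
Qed.

(* Otherwise the ray [sg o r2], which stays in [sg B], would be inequivalent to both [r1]
   and [r2]. *)
Lemma inv_shift_tail_r : eventually_in r2 (fun v => B (g v)).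
Proof.
  pose proof Hag as [_ [E2 E3]].
  assert (BgB : forall v, B (g v) -> B v).
  { intros v H. rewrite <- (E3 v). apply Hshift. intros Ag.
    apply (cut_disjoint _ _ _ Hcut (g v)); auto. }
  assert (FMg : finite (fun v => M (g v))) by (apply finite_preimage with sg; auto; apply Hcut).
  assert (HMg : forall X, boundary_in X M -> boundary_in (fun v => X (g v)) (fun v => M (g v))).
  { intros X HX. apply boundary_in_preimage with sg; auto. }
  destruct (ray_eventually_avoids r2 _ r2_ray FMg) as [N3 HN3].
  destruct (cut_end_r _ _ _ Hcut) as [N2 HN2].
  destruct (cut_end_l _ _ _ Hcut) as [N1 HN1].
  set (N := Nat.max N2 N3).
  assert (Hstay : forall X, boundary_in X M -> X (g (r2 N)) -> forall n, N <= n -> X (g (r2 n))).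
  { intros X HX HXN. apply (ray_eventually_stays (fun v => X (g v)) (fun v => M (g v))); auto.
    intros n Hn; apply HN3; unfold N in Hn; lia. }
  destruct (cut_trichotomy (g (r2 N))) as [Ag|[Mg|Bg]].
  - exfalso.
    assert (Hray := ray_aut sg g r2 Hag r2_ray).
    assert (Hin : eventually_in (fun n => sg (r2 n)) (fun v => B (g v))).
    { exists N2; intros n Hn; rewrite E2; auto. }
    destruct (two_ends _ Hray) as [E|E]; revert E;
      apply (rays_inequiv_of_cut _ _ _ _ (HMg B (cut_boundary_r _ _ _ Hcut)) FMg Hin).
    + exists N1; intros n Hn H. apply BgB in H. apply (cut_disjoint _ _ _ Hcut (r1 n)); auto.
    + exists N; intros n Hn H. apply (cut_disjoint _ _ _ Hcut (g (r2 n))); auto.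
      apply (Hstay A); auto. apply Hcut.
  - exfalso; apply (HN3 N); auto. unfold N; lia.
  - exists N. apply (Hstay B); auto. apply Hcut.
Qed.

Lemma domain_finite : finite domain.
Proof.
  set (X := fun v => B v /\ A (g v)).
  assert (FX : finite X).
  { apply (finite_of_ends_leave X (fun v => M v \/ M (g v))).
    - intros x y [Bx Ax] Hxy.
      destruct (cut_boundary_r _ _ _ Hcut x y Bx Hxy) as [By|My]; [|right; left; auto].
      destruct (boundary_in_preimage A M sg g Hag (cut_boundary_l _ _ _ Hcut) x y Ax Hxy)
        as [Ay|My]; [|right; right; auto].
      left; split; auto.
    - apply finite_union; [|apply finite_preimage with sg; auto]; apply Hcut.
    - destruct (cut_end_l _ _ _ Hcut) as [N HN].
      exists N; intros n Hn [Bn _]; apply (cut_disjoint _ _ _ Hcut (r1 n)); auto.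
    - destruct inv_shift_tail_r as [N HN].
      exists N; intros n Hn [_ Ag]; apply (cut_disjoint _ _ _ Hcut (g (r2 n))); auto. }
  apply finite_incl with (fun v => M v \/ X v).
  - apply finite_union; auto. apply Hcut.
  - intros v [nA Ag]. destruct (classic (B v)); [right; split; auto|left; split; auto].
Qed.

Lemma domain_covers v : exists d k, domain d /\ (v = Nat.iter k sg d \/ v = Nat.iter k g d).
Proof.
  destruct (classic (A v)) as [Av|Av].
  - destruct (iter_shift_leaves_l v) as [n Hn]. destruct (iter_crosses_domain n v Av Hn) as [k [_ Dk]].
    exists (Nat.iter k sg v), k; split; auto. right. symmetry; apply (iter_cancel sg g); auto.
  - destruct (iter_inv_enters_l v) as [n Hn]. set (w := Nat.iter n g v) in *.
    assert (Ew : Nat.iter n sg w = v) by (apply (iter_cancel g sg); apply aut_sym; auto).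
    destruct (iter_crosses_domain n w Hn) as [k [Hk Dk]]; [rewrite Ew; auto|].
    exists (Nat.iter k sg w), (n - k); split; auto; left.
    rewrite <- Nat.iter_add. replace (n - k + k) with n by lia. auto.
Qed.

Lemma domain_free d d' k : domain d -> domain d' -> Nat.iter (S k) sg d' <> d.
Proof.
  pose proof Hag as [_ [E _]].
  assert (Hstay : forall m x, ~ A x -> ~ A (Nat.iter m sg x)).
  { induction m; simpl; auto. intros x H Ha. apply (cut_disjoint _ _ _ Hcut _ Ha). apply Hshift, IHm; auto. }
  intros [_ Agd] [Hd' _] Ed. rewrite <- Ed in Agd. simpl in Agd. rewrite E in Agd.
  apply (Hstay k d'); auto.
Qed.

End Shift.

End Cut.

Lemma translation_with_finite_domain : exists (sg g : V -> V) (D : V -> Prop),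
  aut sg g /\ finite D /\
  (forall v, exists d k, D d /\ (v = Nat.iter k sg d \/ v = Nat.iter k g d)) /\
  (forall d d' k, D d -> D d' -> Nat.iter (S k) sg d' <> d).
Proof.
  destruct cut_exists as [A [B [f0 Hcut]]].
  destruct (shift_exists A B f0 Hcut) as [sg [g [Hag Hshift]]].
  exists sg, g, (domain A g); split; [auto|split; [|split]].
  - apply (domain_finite A B f0 Hcut sg g); auto.
  - apply (domain_covers A B f0 Hcut sg g); auto.
  - intros; apply (domain_free A B f0 Hcut sg g); auto.
Qed.

End TwoEnds.

(** * Periodic colourings *)

Section Coloring.
Variables (sg g : V -> V) (D : V -> Prop).
Hypothesis Hag : aut sg g.
Hypothesis D_finite : finite D.
Hypothesis D_covers : forall v, exists d k, D d /\ (v = Nat.iter k sg d \/ v = Nat.iter k g d).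
Hypothesis D_free : forall d d' k, D d -> D d' -> Nat.iter (S k) sg d' <> d.

Local Open Scope Z_scope.

Definition zpow (i : Z) (v : V) : V :=
  if Z.leb 0 i then Nat.iter (Z.to_nat i) sg v else Nat.iter (Z.to_nat (- i)) g v.

Lemma zpow_succ i v : zpow (Z.succ i) v = sg (zpow i v).
Proof.
  destruct Hag as [_ [_ E]].
  unfold zpow. destruct (Z.leb_spec 0 i) as [Hi|Hi].
  - destruct (Z.leb_spec 0 (Z.succ i)); [|lia].
    rewrite Z2Nat.inj_succ by lia. reflexivity.
  - destruct (Z.leb_spec 0 (Z.succ i)).
    + assert (i = -1) by lia; subst. simpl. auto.
    + replace (Z.to_nat (- i)) with (S (Z.to_nat (- Z.succ i))).
      * simpl. rewrite E. auto.
      * rewrite <- Z2Nat.inj_succ by lia. f_equal; lia.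
Qed.

Lemma zpow_pred i v : zpow (Z.pred i) v = g (zpow i v).
Proof.
  destruct Hag as [_ [E _]].
  rewrite <- (Z.succ_pred i) at 2. rewrite zpow_succ, E. auto.
Qed.

Lemma zpow_add i j v : zpow (i + j) v = zpow i (zpow j v).
Proof.
  revert j v. induction i using Z.peano_ind; intros j v.
  - reflexivity.
  - replace (Z.succ i + j) with (Z.succ (i + j)) by lia. rewrite !zpow_succ, IHi; auto.
  - replace (Z.pred i + j) with (Z.pred (i + j)) by lia. rewrite !zpow_pred, IHi; auto.
Qed.

Lemma zpow_of_nat (n : nat) v : zpow (Z.of_nat n) v = Nat.iter n sg v.
Proof. unfold zpow. destruct (Z.leb_spec 0 (Z.of_nat n)); [|lia]. rewrite Nat2Z.id; auto. Qed.

Lemma zpow_opp_of_nat (n : nat) v : zpow (- Z.of_nat n) v = Nat.iter n g v.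
Proof.
  destruct n; [reflexivity|]. unfold zpow.
  destruct (Z.leb_spec 0 (- Z.of_nat (S n))); [lia|].
  rewrite Z.opp_involutive, Nat2Z.id; auto.
Qed.

Lemma zpow_opp_l i v : zpow (- i) (zpow i v) = v.
Proof. rewrite <- zpow_add. replace (- i + i) with 0 by lia. auto. Qed.

Lemma zpow_aut i : aut (zpow i) (zpow (- i)).
Proof.
  assert (fwd : forall m x y, adj x y -> adj (zpow m x) (zpow m y)).
  { intros m x y H. unfold zpow. destruct (Z.leb 0 m).
    - apply iter_adj with g; auto.
    - apply iter_adj with sg; auto. apply aut_sym; auto. }
  split; [|split].
  - intros x y; split; [apply fwd|]. intros H. apply (fwd (- i)) in H. rewrite !zpow_opp_l in H; auto.
  - apply zpow_opp_l.
  - intros x. rewrite <- (Z.opp_involutive i) at 1. apply zpow_opp_l.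
Qed.

Lemma coord_exists v : exists p : Z * V, D (snd p) /\ v = zpow (fst p) (snd p).
Proof.
  destruct (D_covers v) as [d [k [Dd [E|E]]]].
  - exists (Z.of_nat k, d); simpl; split; auto. rewrite zpow_of_nat; auto.
  - exists (- Z.of_nat k, d); simpl; split; auto. rewrite zpow_opp_of_nat; auto.
Qed.

Lemma coord_unique i j d d' : D d -> D d' -> zpow i d = zpow j d' -> i = j /\ d = d'.
Proof.
  intros Dd Dd' E.
  assert (Hpos : forall a b m, D a -> D b -> 0 < m -> zpow m b <> a).
  { intros a b m Da Db Hm Em. apply (D_free a b (Z.to_nat m - 1)); auto.
    rewrite <- zpow_of_nat, <- Em. f_equal. lia. }
  assert (E1 : d = zpow (j - i) d') by (rewrite <- (zpow_opp_l i d), E, <- zpow_add; f_equal; lia).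
  assert (E2 : d' = zpow (i - j) d) by (rewrite <- (zpow_opp_l j d'), <- E, <- zpow_add; f_equal; lia).
  destruct (Z.lt_trichotomy i j) as [H|[H|H]].
  - exfalso; apply (Hpos d d' (j - i)); auto; lia.
  - split; auto. rewrite E1, H. replace (j - j) with 0 by lia. auto.
  - exfalso; apply (Hpos d' d (i - j)); auto; lia.
Qed.

Definition coord (v : V) : Z * V :=
  epsilon (inhabits (0, v)) (fun p => D (snd p) /\ v = zpow (fst p) (snd p)).

Lemma coord_spec v : D (snd (coord v)) /\ v = zpow (fst (coord v)) (snd (coord v)).
Proof. exact (epsilon_spec _ (fun p => D (snd p) /\ v = zpow (fst p) (snd p)) (coord_exists v)). Qed.

Lemma coord_zpow i d : D d -> coord (zpow i d) = (i, d).
Proof.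
  intros Dd. destruct (coord_spec (zpow i d)) as [Dd' E].
  destruct (coord_unique _ _ _ _ Dd Dd' E) as [E1 E2].
  destruct (coord (zpow i d)); simpl in *; subst; auto.
Qed.

Lemma coord_translate m v : coord (zpow m v) = (m + fst (coord v), snd (coord v)).
Proof.
  destruct (coord_spec v) as [Dv E]. rewrite E at 1. rewrite <- zpow_add. apply coord_zpow; auto.
Qed.

Lemma coord_jump_bounded : exists M : nat,
  forall x y, adj x y -> Z.abs (fst (coord y) - fst (coord x)) <= Z.of_nat M.
Proof.
  destruct D_finite as [LD HLD].
  destruct (neighbours_finite LD) as [LN HLN].
  destruct (uniform_bound (fun n w => Z.abs (fst (coord w)) <= Z.of_nat n) LN) as [M HM].
  { intros n m a Hnm H; lia. }
  { intros w _. exists (Z.to_nat (Z.abs (fst (coord w)))); lia. }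
  exists M; intros x y Hxy.
  destruct (coord_spec x) as [Dx Ex].
  assert (H : adj (snd (coord x)) (zpow (- fst (coord x)) y)).
  { rewrite <- (zpow_opp_l (fst (coord x)) (snd (coord x))), <- Ex.
    apply (aut_adj _ _ _ _ (zpow_aut _)); auto. }
  specialize (HM _ (HLN _ (ex_intro _ _ (conj (HLD _ Dx) H)))).
  rewrite coord_translate in HM. simpl in HM. lia.
Qed.

Section BoundedJumps.
Variable M : nat.
Hypothesis coord_jump : forall x y, adj x y -> Z.abs (fst (coord y) - fst (coord x)) <= Z.of_nat M.

Let W : nat := S M.

(* Colour [v] by its orbit representative and by its coordinate modulo [M + 1]. *)
Lemma proper_coloring_exists : exists k c, proper_coloring V adj k c.
Proof.
  destruct D_finite as [LD HLD].
  destruct (choice (fun v n => nth_error LD n = Some (snd (coord v)))) as [pos Hpos].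
  { intros v. apply In_nth_error, HLD, coord_spec. }
  set (r := fun v => Z.to_nat (fst (coord v) mod Z.of_nat W)).
  assert (Hr : forall v, (r v < W)%nat).
  { intros v. unfold r. pose proof (Z.mod_pos_bound (fst (coord v)) (Z.of_nat W)). lia. }
  assert (Hpl : forall v, (pos v < length LD)%nat).
  { intros v. apply nth_error_Some. rewrite Hpos; discriminate. }
  exists (length LD * W)%nat, (fun v => W * pos v + r v)%nat. split.
  - intros v. specialize (Hr v). specialize (Hpl v). nia.
  - intros x y Hxy E.
    destruct (Nat.div_mod_unique W (pos x) (pos y) (r x) (r y)) as [Ep Er]; auto.
    assert (Ed : snd (coord x) = snd (coord y)).
    { pose proof (Hpos x) as H. rewrite Ep, Hpos in H. congruence. }
    assert (Ei : fst (coord x) = fst (coord y)).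
    { apply Z_eq_of_mod_eq with (Z.of_nat W); [lia|pose proof (coord_jump x y Hxy); lia|].
      unfold r in Er. apply Z2Nat.inj in Er; auto; apply Z.mod_pos_bound; lia. }
    assert (Exy : x = y).
    { rewrite (proj2 (coord_spec x)), (proj2 (coord_spec y)), Ed, Ei; reflexivity. }
    subst; apply (adj_irrefl y); auto.
Qed.

Section Periodic.
Variables (k : nat) (c0 : V -> nat).
Hypothesis Hc0 : proper_coloring V adj k c0.

(* Only finitely many colour patterns fit on a window of [M + 1] consecutive layers. *)
Lemma window_repeats : exists I p, Z.of_nat W <= p /\ forall d t, D d -> (t < W)%nat ->
  c0 (zpow (I + Z.of_nat t) d) = c0 (zpow (I + p + Z.of_nat t) d).
Proof.
  destruct D_finite as [LD HLD].
  set (LP := list_prod LD (seq 0 W)).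
  set (pat := fun a : nat => map (fun q => c0 (zpow (Z.of_nat (a * W) + Z.of_nat (snd q)) (fst q))) LP).
  destruct (bounded_lists_finite (length LP) k) as [L HL].
  destruct (pigeonhole L pat) as [a [b [Hab Epat]]].
  { intros n. apply HL; unfold pat; [rewrite length_map; auto|].
    intros x Hx. apply in_map_iff in Hx. destruct Hx as [q [<- _]]. apply Hc0. }
  exists (Z.of_nat (a * W)), (Z.of_nat (b * W) - Z.of_nat (a * W)); split; [nia|].
  intros d t Hd Ht.
  replace (Z.of_nat (a * W) + (Z.of_nat (b * W) - Z.of_nat (a * W))) with (Z.of_nat (b * W)) by lia.
  apply (proj1 map_ext_in_iff Epat (d, t)).
  apply in_prod; [apply HLD; auto|apply in_seq; lia].
Qed.

Section Folding.
Variables I p : Z.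
Hypothesis Hp : Z.of_nat W <= p.
Hypothesis Hwindow : forall d t, D d -> (t < W)%nat ->
  c0 (zpow (I + Z.of_nat t) d) = c0 (zpow (I + p + Z.of_nat t) d).

(* Layers are folded periodically onto [I, I + p); the window equality glues the fold. *)
Definition folded_coloring (v : V) : nat :=
  c0 (zpow (I + (fst (coord v) - I) mod p) (snd (coord v))).

Lemma folded_coloring_window v s : 0 <= s < p + Z.of_nat W ->
  (fst (coord v) - I) mod p = s mod p -> folded_coloring v = c0 (zpow (I + s) (snd (coord v))).
Proof.
  intros Hs E. unfold folded_coloring. rewrite E.
  destruct (Z.lt_ge_cases s p) as [Hlt|Hge].
  - rewrite Z.mod_small by lia; reflexivity.
  - replace (s mod p) with (s - p) by (apply Z.mod_unique with 1; lia).
    replace (s - p) with (Z.of_nat (Z.to_nat (s - p))) by lia.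
    rewrite Hwindow; [f_equal; f_equal; lia|apply coord_spec|lia].
Qed.

Lemma folded_coloring_edge x y : adj x y -> fst (coord x) <= fst (coord y) ->
  folded_coloring x <> folded_coloring y.
Proof.
  intros Hxy Hij.
  destruct (coord_spec x) as [Dx Ex]. destruct (coord_spec y) as [Dy Ey].
  set (i := fst (coord x)) in *. set (j := fst (coord y)) in *.
  set (r := (i - I) mod p).
  assert (Hr : 0 <= r < p) by (apply Z.mod_pos_bound; lia).
  assert (HM := coord_jump x y Hxy). fold i j in HM.
  assert (Had : adj (zpow (I + r) (snd (coord x))) (zpow (I + (r + (j - i))) (snd (coord y)))).
  { pose proof (aut_adj _ _ _ _ (zpow_aut (I + r - i)) Hxy) as H.
    rewrite Ex, Ey, <- !zpow_add in H.
    replace (I + r - i + i) with (I + r) in H by lia.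
    replace (I + r - i + j) with (I + (r + (j - i))) in H by lia. exact H. }
  rewrite (folded_coloring_window x r), (folded_coloring_window y (r + (j - i))).
  - apply Hc0; auto.
  - unfold W in *; lia.
  - unfold r. rewrite Z.add_mod_idemp_l by lia. f_equal; lia.
  - lia.
  - symmetry; apply Z.mod_mod; lia.
Qed.

Lemma folded_coloring_proper : proper_coloring V adj k folded_coloring.
Proof.
  split; [intros v; apply Hc0|].
  intros x y Hxy. destruct (Z.le_ge_cases (fst (coord x)) (fst (coord y))).
  - apply folded_coloring_edge; auto.
  - intros E; symmetry in E; revert E. apply folded_coloring_edge; auto.
Qed.

Lemma folded_coloring_invariant m v : folded_coloring (zpow (p * m) v) = folded_coloring v.
Proof.
  unfold folded_coloring. rewrite coord_translate. simpl. do 3 f_equal.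
  replace (p * m + fst (coord v) - I) with ((fst (coord v) - I) + m * p) by lia.
  apply Z.mod_add. lia.
Qed.

Lemma folded_coloring_periodic : periodic_coloring V adj folded_coloring.
Proof.
  destruct D_finite as [LD HLD].
  exists (map (fun q => zpow (Z.of_nat (snd q)) (fst q)) (list_prod LD (seq 0 (Z.to_nat p)))).
  intros v. destruct (coord_spec v) as [Dv Ev].
  set (i := fst (coord v)) in *. set (d := snd (coord v)) in *.
  assert (Hdm := Z.div_mod i p ltac:(lia)).
  assert (Hr := Z.mod_pos_bound i p ltac:(lia)).
  exists (zpow (i mod p) d), (zpow (p * (i / p))); split; [|split].
  - apply in_map_iff. exists (d, Z.to_nat (i mod p)); split.
    + simpl. rewrite Z2Nat.id by lia; reflexivity.
    + apply in_prod; [apply HLD; auto|]. apply in_seq. lia.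
  - split; [apply is_aut_of_aut with (zpow (- (p * (i / p)))); apply zpow_aut|].
    apply folded_coloring_invariant.
  - rewrite <- zpow_add, <- Hdm. symmetry; exact Ev.
Qed.

End Folding.

Lemma periodic_coloring_exists : exists c, proper_coloring V adj k c /\ periodic_coloring V adj c.
Proof.
  destruct window_repeats as [I [p [Hp Hwindow]]].
  exists (folded_coloring I p).
  split; [apply folded_coloring_proper|apply folded_coloring_periodic]; auto.
Qed.

End Periodic.
End BoundedJumps.
End Coloring.
End Graph.

Theorem theorem5p4 (V : Type) (adj : V -> V -> Prop) :
  simple_graph V adj ->
  connected V adj ->
  locally_finite V adj ->
  quasi_transitive V adj ->
  has_exactly_two_ends V adj ->
  exists (k : nat) (c : V -> nat),
    chromatic_number V adj k /\ proper_coloring V adj k c /\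
    periodic_coloring V adj c.
Proof.
  intros [Hsym Hirr] Hconn Hlf Hqt [r1 [r2 [R1 [R2 [N12 Hends]]]]].
  destruct (translation_with_finite_domain V adj Hsym Hlf Hconn r1 r2 R1 R2 N12 Hends Hqt)
    as [sg [g [D [Hag [HD [Hcov Hfree]]]]]].
  destruct (coord_jump_bounded V adj Hlf sg g D Hag HD Hcov Hfree) as [M HM].
  destruct (dec_inh_nat_subset_has_unique_least_element
              (fun k => exists c, proper_coloring V adj k c)) as [k [[[c0 Hc0] Hmin] _]].
  - intros n; apply classic.
  - exact (proper_coloring_exists V adj Hirr sg g D HD Hcov M HM).
  - destruct (periodic_coloring_exists V adj Hsym sg g D Hag HD Hcov Hfree M HM k c0 Hc0)
      as [c [Hc Hper]].
    exists k, c; split; [split|split]; auto.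
    + exists c0; auto.
    + intros j c' H. apply Hmin. exists c'; auto.
Qed.
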